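(* Let $S' \subset \mathbb{R}^j$ be a subset of a Euclidean space. Then for all positive integers $k$ and all $m\geq 2$, we have \[\mathrm{Tv}(S' \times \mathbb{R}^k, m) \leq \mathrm{Tv}(S' , \mathrm{Tv}(\mathbb{R}^k,m)).\]
   Context: For $S\subseteq\mathbb{R}^d$ and an integer $m\geq 2$, the Tverberg number $\mathrm{Tv}(S,m)$ is the smallest positive integer $n$ such that any multiset of $n$ points in $S$ admits a partition into $m$ submultisets $A_1,\dots,A_m$ with $\left(\bigcap_{i=1}^m\mathrm{conv}(A_i)\right)\cap S\neq\varnothing$ (and $\mathrm{Tv}(S,m)=\infty$ if no such number exists). *)

From HB Require Import structures.
From mathcomp Require Import all_boot all_order all_algebra.
From mathcomp Require Import boolp classical_sets reals.
Set Implicit Arguments. Unset Strict Implicit. Unset Printing Implicit Defensive.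
Import Order.TTheory GRing.Theory Num.Theory.
Local Open Scope ring_scope.

Section Tverberg.
Variable R : realType.

Definition in_conv (d n : nat) (p : 'I_n -> 'rV[R]_d) (P : pred 'I_n)
    (x : 'rV[R]_d) : Prop :=
  exists w : 'I_n -> R,
    [/\ forall a, 0 <= w a,
        forall a, ~~ P a -> w a = 0,
        \sum_(a < n) w a = 1
      & x = \sum_(a < n) w a *: p a].

(* Every multiset of n points of S admits a partition into m submultisets
   A_i = {p a | f a = i} whose convex hulls have a common point in S. *)
Definition tverberg_prop (d : nat) (S : set 'rV[R]_d) (m n : nat) : Prop :=
  forall p : 'I_n -> 'rV[R]_d, (forall a, S (p a)) ->
    exists f : 'I_n -> 'I_m, exists x, S x /\
      forall i : 'I_m, in_conv p (fun a => f a == i) x.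

Definition is_least_tv (d : nat) (S : set 'rV[R]_d) (m n : nat) : Prop :=
  [/\ (0 < n)%N, tverberg_prop S m n &
      forall n', (0 < n')%N -> tverberg_prop S m n' -> (n <= n')%N].

(* Tverberg number: Some n = smallest positive n with the property,
   None = infinity. *)
Definition Tv (d : nat) (S : set 'rV[R]_d) (m : nat) : option nat :=
  match pselect (exists n, is_least_tv S m n) with
  | left H => Some (projT1 (cid H))
  | right _ => None
  end.

End Tverberg.

(* Order on N ∪ {∞} (None = ∞). *)
Definition le_ext (a b : option nat) : Prop :=
  match b with
  | None => True
  | Some b' => match a with Some a' => (a' <= b')%N | None => False end
  end.

(* S' × R^k as a subset of R^(j+k): rows whose first j coordinates lie in S'. *)
Definition prod_full (R : realType) (j k : nat) (S' : set 'rV[R]_j)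
  : set 'rV[R]_(j + k) := fun x => S' (lsubmx x).

Definition full_space (R : realType) (k : nat) : set 'rV[R]_k := setT.
Arguments full_space : clear implicits.

From HB Require Import structures.
From mathcomp Require Import all_boot all_order all_algebra.
From mathcomp Require Import boolp classical_sets reals.
Set Implicit Arguments. Unset Strict Implicit. Unset Printing Implicit Defensive.
Import Order.TTheory GRing.Theory Num.Theory.
Local Open Scope ring_scope.

(* Given M = Tv(S', N) points of S' x R^k, first apply Tverberg in S' to their
   S'-coordinates: this splits them into N groups whose hulls share a point x
   of S'.  Each group yields a point of the hull of its lifted points whose
   S'-coordinate is x; the R^k-coordinates of these N points are then
   partitioned by Tverberg in R^k into m classes with a common point z.
   Merging the groups along this partition gives m classes of the original
   points whose hulls all contain (x, z), since convex hulls compose. *)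

Section TverbergNumber.
Variable R : realType.

Lemma TvP d (S : set 'rV[R]_d) m n : Tv S m = Some n -> is_least_tv S m n.
Proof. by rewrite /Tv; case: pselect => [H|//] [<-]; exact: (projT2 (cid H)). Qed.

Lemma Tv_le_of_tverberg d (S : set 'rV[R]_d) m n :
  (0 < n)%N -> tverberg_prop S m n -> exists2 t, Tv S m = Some t & (t <= n)%N.
Proof.
move=> n_gt0 tvn; rewrite /Tv; case: pselect => [H|noTv].
  by have [_ _ least] := projT2 (cid H); exists (projT1 (cid H)); last exact: least.
have exn : exists n, (0 < n)%N && `[< tverberg_prop S m n >].
  by exists n; rewrite n_gt0; apply/asboolP.
case: noTv; exists (ex_minn exn); case: ex_minnP => t /andP[t_gt0 /asboolP tvt] tmin.
by split=> // n' n'_gt0 tvn'; apply: tmin; rewrite n'_gt0; apply/asboolP.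
Qed.

End TverbergNumber.

Section ConvexHulls.
Variables (R : realType) (d : nat).

Lemma in_conv_comp n N (p : 'I_n -> 'rV[R]_d) (q : 'I_N -> 'rV[R]_d)
    (f : 'I_n -> 'I_N) (Q : pred 'I_N) x :
  (forall i, in_conv p (fun a => f a == i) (q i)) -> in_conv q Q x ->
  in_conv p (fun a => Q (f a)) x.
Proof.
move=> /choice[w wP] [v [v_ge0 vQ v_sum1 ->]].
exists (fun a => \sum_(i < N) v i * w i a); split.
- move=> a; apply: sumr_ge0 => i _; rewrite mulr_ge0 //.
  by have [] := wP i.
- move=> a Qfa; apply: big1 => i _; have [_ w0 _ _] := wP i.
  have [fai|fai] := eqVneq (f a) i; first by rewrite vQ -?fai ?mul0r.
  by rewrite w0 ?fai ?mulr0.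
- rewrite exchange_big -v_sum1; apply: eq_bigr => i _.
  by have [_ _ w_sum1 _] := wP i; rewrite -mulr_sumr w_sum1 mulr1.
- under [RHS]eq_bigr do rewrite scaler_suml.
  rewrite [RHS]exchange_big; apply: eq_bigr => i _; have [_ _ _ ->] := wP i.
  by rewrite scaler_sumr; apply: eq_bigr => a _; rewrite scalerA.
Qed.

Lemma in_conv_linear d' n (f : {linear 'rV[R]_d -> 'rV[R]_d'})
    (p : 'I_n -> 'rV[R]_d) P y :
  in_conv (fun a => f (p a)) P y -> exists x, in_conv p P x /\ f x = y.
Proof.
move=> [w [w_ge0 w0 w_sum1 ->]]; exists (\sum_(a < n) w a *: p a).
split; first by exists w.
by rewrite linear_sum; apply: eq_bigr => a _; rewrite linearZ.
Qed.

End ConvexHulls.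

Lemma in_conv_row_mx (R : realType) j k n (q : 'I_n -> 'rV[R]_(j + k)) P x z :
  (forall a, lsubmx (q a) = x) -> in_conv (fun a => rsubmx (q a)) P z ->
  in_conv q P (row_mx x z).
Proof.
move=> qx [w [w_ge0 w0 w_sum1 ->]]; exists w; split => //.
rewrite -[RHS]hsubmxK !linear_sum; congr row_mx.
  under [RHS]eq_bigr do rewrite linearZ /= qx.
  by rewrite -scaler_suml w_sum1 scale1r.
by apply: eq_bigr => a _; rewrite linearZ.
Qed.

Lemma tverberg_prop_prod (R : realType) j k (S' : set 'rV[R]_j) m N M :
  tverberg_prop S' N M -> tverberg_prop (full_space R k) m N ->
  tverberg_prop (@prod_full R j k S') m M.
Proof.
move=> tvS' tvRk p S'p.
have [f [x [S'x conv_x]]] := tvS' (fun a => lsubmx (p a)) S'p.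
have /choice[q /all_and2[q_conv qx]] i :
    exists y, in_conv p (fun a => f a == i) y /\ lsubmx y = x.
  exact: in_conv_linear (conv_x i).
have [g [z [_ conv_z]]] := tvRk (fun i => rsubmx (q i)) (fun _ => I).
exists (fun a => g (f a)), (row_mx x z); split; first by rewrite /prod_full row_mxKl.
move=> l; apply: (in_conv_comp (Q := fun i => g i == l) q_conv).
exact: in_conv_row_mx qx (conv_z l).
Qed.

Theorem theorem3 (R : realType) (j : nat) (S' : set 'rV[R]_j) (k m : nat) :
  (0 < k)%N -> (2 <= m)%N ->
  forall N : nat, Tv (full_space R k) m = Some N ->
  le_ext (Tv (@prod_full R j k S') m) (Tv S' N).
Proof.
move=> _ _ N /TvP[_ tvRk _]; rewrite /le_ext.
case TvS': (Tv S' N) => [M|//]; have [M_gt0 tvS' _] := TvP TvS'.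
by have [t -> tM] := Tv_le_of_tverberg M_gt0 (tverberg_prop_prod tvS' tvRk).
Qed.
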